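(* For every real $c>0$ and all integers $n,k\ge0$, $$|\beta_k^n|=\Big|\int_{-1}^1\overline P_k(x)\,\psi_{n,c}(x)\,dx\Big|\le\Big(\frac c2\Big)^k\frac{\sqrt\pi}{\Gamma(k+3/2)}\,\frac{1}{|\mu_n(c)|}.$$
   Context: $\overline P_k=\sqrt{k+1/2}\,P_k$ is the $L^2([-1,1])$-normalized Legendre polynomial. The prolate spheroidal wave functions $\psi_{n,c}$ (normalized by $\int_{-1}^1|\psi_{n,c}|^2=1$) are the eigenfunctions of the finite Fourier transform $Q_cf(x)=\int_{-1}^1e^{icxy}f(y)\,dy$ on $L^2([-1,1])$: $Q_c\psi_{n,c}=\mu_n(c)\psi_{n,c}$, with $\mu_n(c)\ne0$. $\Gamma$ is the Gamma function. *)

From Stdlib Require Import Reals Arith Factorial.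
Open Scope R_scope.

(* Legendre polynomials via Bonnet's recurrence:
   P_0 = 1, P_1 = x, (m+2) P_{m+2} = (2m+3) x P_{m+1} - (m+1) P_m.
   legendre_pair m x = (P_m x, P_{m+1} x). *)
Fixpoint legendre_pair (m : nat) (x : R) : R * R :=
  match m with
  | O => (1, x)
  | S m' =>
      let (p, q) := legendre_pair m' x in
      (q, ((2 * INR m' + 3) * x * q - (INR m' + 1) * p) / (INR m' + 2))
  end.

Definition legendre (k : nat) (x : R) : R := fst (legendre_pair k x).

(* L^2([-1,1])-normalized Legendre polynomial  Pbar_k = sqrt(k+1/2) P_k *)
Definition Pbar (k : nat) (x : R) : R := sqrt (INR k + / 2) * legendre k x.

Fixpoint rising_prod (s : R) (n : nat) : R :=
  match n with
  | O => s
  | S m => rising_prod s m * (s + INR (S m))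
  end.

(* Gauss's product formula: Gamma(s) = lim_n n! n^s / (s (s+1) ... (s+n)),
   valid for s > 0 (indeed for s not a non-positive integer). *)
Definition gauss_seq (s : R) (n : nat) : R :=
  INR (fact n) * Rpower (INR n) s / rising_prod s n.

Definition is_Gamma (s g : R) : Prop := Un_cv (gauss_seq s) g.

(* psi is a real-valued, continuous, L^2([-1,1])-normalized eigenfunction of
   the finite Fourier transform Q_c f(x) = int_{-1}^1 e^{icxy} f(y) dy with
   complex eigenvalue mu = mr + i mi.  Since psi is real, Q_c psi = mu psi is
   equivalent to the two real equations on the cosine and sine parts. *)
Definition prolate_eigen (c : R) (psi : R -> R) (mr mi : R) : Prop :=
  (forall x, -1 <= x <= 1 -> continuity_pt psi x) /\
  (exists pr : Riemann_integrable (fun y => psi y ^ 2) (-1) 1, RiemannInt pr = 1) /\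
  (forall x, -1 <= x <= 1 ->
     exists prc : Riemann_integrable (fun y => cos (c * x * y) * psi y) (-1) 1,
       RiemannInt prc = mr * psi x) /\
  (forall x, -1 <= x <= 1 ->
     exists prs : Riemann_integrable (fun y => sin (c * x * y) * psi y) (-1) 1,
       RiemannInt prs = mi * psi x).

From Stdlib Require Import Reals Lra Lia Factorial ClassicalEpsilon FunctionalExtensionality.
Open Scope R_scope.

(* Put beta = int Pbar_k psi, a = mr beta and b = mi beta.  The eigen-equations give
   int psi(y) (a cos(cxy) + b sin(cxy)) dy = (a mr + b mi) psi(x), hence
   a^2 + b^2 = int int Pbar_k(x) psi(y) (a cos(cxy) + b sin(cxy)) dy dx.
   Replace the kernel by its Taylor polynomial of order k + M in cxy; being a finite sum it can
   be integrated term by term.  The Legendre moments int P_k x^j vanish for j < k and equal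
   (k+i)! / (i! 2^k k!) int (1-y^2)^k y^i for j = k + i, so the double integral resums to
   sqrt(k+1/2) c^k / (2^k k!) int x^k psi(x) int (1-y^2)^k T(cxy) dy dx, where T is the order-M
   Taylor polynomial of the k-th derivative of the kernel, which is again of the form
   A cos + B sin with A^2 + B^2 = a^2 + b^2.  Since int |x^k psi| <= sqrt(2/(2k+1)), letting
   M -> oo yields |beta| |mu| = sqrt(a^2 + b^2) <= c^k / (2^k k!) int (1-y^2)^k dy.
   Finally int (1-y^2)^k = 2 W_(2k+1) for the Wallis integrals W_p = int_0^(pi/2) sin^p, and
   Wallis' product squeezes Gauss's sequence for Gamma(k+3/2), giving
   Gamma(k+3/2) int (1-y^2)^k <= k! sqrt pi. *)

Lemma INR_S_pos n : 0 < INR n + 1.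
Proof. pose proof (pos_INR n); lra. Qed.

Lemma INR_fact_pos n : 0 < INR (fact n).
Proof. apply lt_0_INR, lt_O_fact. Qed.

Lemma INR_fact_neq_0 n : INR (fact n) <> 0.
Proof. apply not_0_INR, fact_neq_0. Qed.

Lemma Rabs_le_inv x b : Rabs x <= b -> - b <= x <= b.
Proof. unfold Rabs; destruct (Rcase_abs x); lra. Qed.

Lemma abs_le_1_mult x y : Rabs x <= 1 -> Rabs y <= 1 -> Rabs (x * y) <= 1.
Proof.
  intros; rewrite Rabs_mult, <- (Rmult_1_l 1).
  apply Rmult_le_compat; auto using Rabs_pos.
Qed.

Lemma Un_cv_const l : Un_cv (fun _ => l) l.
Proof. intros eps Heps; exists 0%nat; intros; unfold Rdist; rewrite Rminus_diag, Rabs_R0; lra. Qed.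

Lemma m1_le_1 : -1 <= 1. Proof. lra. Qed.
#[local] Hint Resolve m1_le_1 : core.

(** * Riemann integrals of continuous functions *)

(* [integral a b f] is unspecified when [f] is not integrable; all integrands below are continuous. *)
Definition integral (a b : R) (f : R -> R) : R :=
  epsilon (inhabits 0) (fun v => exists pr : Riemann_integrable f a b, RiemannInt pr = v).

Lemma integral_RiemannInt a b f (pr : Riemann_integrable f a b) : integral a b f = RiemannInt pr.
Proof.
  unfold integral.
  destruct (epsilon_spec (inhabits 0)
              (fun v => exists pr : Riemann_integrable f a b, RiemannInt pr = v)) as [pr' <-].
  - exists (RiemannInt pr), pr; reflexivity.
  - apply RiemannInt_P5.
Qed.

Definition cont_on (a b : R) (f : R -> R) : Prop :=
  forall x, a <= x <= b -> continuity_pt f x.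

Section ContOn.
Variables a b : R.

Lemma cont_on_continuity f : continuity f -> cont_on a b f.
Proof. intros H x _; apply H. Qed.

Lemma cont_on_const l : cont_on a b (fun _ => l).
Proof. apply cont_on_continuity, continuity_const; intros ? ?; reflexivity. Qed.

Lemma cont_on_id : cont_on a b (fun x => x).
Proof. apply cont_on_continuity, derivable_continuous, derivable_id. Qed.

Lemma cont_on_plus f g : cont_on a b f -> cont_on a b g -> cont_on a b (fun x => f x + g x).
Proof. intros Hf Hg x Hx; apply (continuity_pt_plus f g); auto. Qed.

Lemma cont_on_minus f g : cont_on a b f -> cont_on a b g -> cont_on a b (fun x => f x - g x).
Proof. intros Hf Hg x Hx; apply (continuity_pt_minus f g); auto. Qed.

Lemma cont_on_mult f g : cont_on a b f -> cont_on a b g -> cont_on a b (fun x => f x * g x).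
Proof. intros Hf Hg x Hx; apply (continuity_pt_mult f g); auto. Qed.

Lemma cont_on_abs f : cont_on a b f -> cont_on a b (fun x => Rabs (f x)).
Proof. intros Hf x Hx; apply (continuity_pt_comp f Rabs); auto; apply Rcontinuity_abs. Qed.

Lemma cont_on_pow f n : cont_on a b f -> cont_on a b (fun x => f x ^ n).
Proof.
  intros Hf; induction n; simpl.
  - apply cont_on_const.
  - apply cont_on_mult; auto.
Qed.

Lemma cont_on_sum (f : nat -> R -> R) N :
  (forall j, cont_on a b (f j)) -> cont_on a b (fun x => sum_f_R0 (fun j => f j x) N).
Proof. intros H; induction N; simpl; auto; apply cont_on_plus; auto. Qed.

End ContOn.

#[local] Hint Resolve cont_on_const cont_on_id cont_on_plus cont_on_minus cont_on_mult
  cont_on_abs cont_on_pow cont_on_sum : cont_on.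

Ltac cont := solve [auto 12 with cont_on].

Section Integral.
Variables a b : R.
Hypothesis hab : a <= b.

Lemma integrable_of_cont_on f : cont_on a b f -> Riemann_integrable f a b.
Proof. intros; apply continuity_implies_RiemannInt; auto. Qed.

Lemma integral_ext f g :
  cont_on a b f -> (forall x, a <= x <= b -> f x = g x) -> integral a b f = integral a b g.
Proof.
  intros Hf H.
  pose proof (integrable_of_cont_on f Hf) as pf.
  assert (pg : Riemann_integrable g a b).
  { apply (@Riemann_integrable_ext f g a b); auto.
    intros x Hx; apply H; rewrite Rmin_left, Rmax_right in Hx; auto. }
  rewrite (integral_RiemannInt _ _ _ pf), (integral_RiemannInt _ _ _ pg).
  apply RiemannInt_P18; auto; intros; apply H; lra.
Qed.

Lemma integral_const l : integral a b (fun _ => l) = l * (b - a).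
Proof.
  change (fun _ : R => l) with (fct_cte l).
  rewrite (integral_RiemannInt _ _ _ (RiemannInt_P14 a b l)); apply RiemannInt_P15.
Qed.

Lemma integral_lin f g l : cont_on a b f -> cont_on a b g ->
  integral a b (fun x => f x + l * g x) = integral a b f + l * integral a b g.
Proof.
  intros Hf Hg.
  pose proof (integrable_of_cont_on f Hf) as pf; pose proof (integrable_of_cont_on g Hg) as pg.
  rewrite (integral_RiemannInt _ _ _ (RiemannInt_P10 l pf pg)),
    (integral_RiemannInt _ _ _ pf), (integral_RiemannInt _ _ _ pg).
  apply RiemannInt_P13.
Qed.

Lemma integral_plus f g : cont_on a b f -> cont_on a b g ->
  integral a b (fun x => f x + g x) = integral a b f + integral a b g.
Proof.
  intros Hf Hg; rewrite <- (Rmult_1_l (integral a b g)), <- integral_lin; auto.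
  apply integral_ext; [cont | intros; ring].
Qed.

Lemma integral_minus f g : cont_on a b f -> cont_on a b g ->
  integral a b (fun x => f x - g x) = integral a b f - integral a b g.
Proof.
  intros Hf Hg; replace (_ - integral a b g) with (integral a b f + (-1) * integral a b g) by ring.
  rewrite <- integral_lin; auto.
  apply integral_ext; [cont | intros; ring].
Qed.

Lemma integral_scal l f : cont_on a b f -> integral a b (fun x => l * f x) = l * integral a b f.
Proof.
  intros Hf; rewrite <- (Rplus_0_l (l * integral a b f)).
  replace 0 with (integral a b (fun _ => 0)) by (rewrite integral_const; ring).
  rewrite <- integral_lin; [apply integral_ext; [cont | intros; ring] | cont | auto].
Qed.

Lemma integral_sum (f : nat -> R -> R) N : (forall j, cont_on a b (f j)) ->
  integral a b (fun x => sum_f_R0 (fun j => f j x) N) = sum_f_R0 (fun j => integral a b (f j)) N.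
Proof.
  intros H; induction N; simpl.
  - apply integral_ext; auto.
  - rewrite integral_plus, IHN; auto; cont.
Qed.

Lemma integral_le f g : cont_on a b f -> cont_on a b g ->
  (forall x, a <= x <= b -> f x <= g x) -> integral a b f <= integral a b g.
Proof.
  intros Hf Hg H.
  pose proof (integrable_of_cont_on f Hf) as pf; pose proof (integrable_of_cont_on g Hg) as pg.
  rewrite (integral_RiemannInt _ _ _ pf), (integral_RiemannInt _ _ _ pg).
  apply RiemannInt_P19; auto; intros; apply H; lra.
Qed.

Lemma integral_ge0 f : cont_on a b f -> (forall x, a <= x <= b -> 0 <= f x) -> 0 <= integral a b f.
Proof.
  intros Hf H; replace 0 with (integral a b (fun _ => 0)) by (rewrite integral_const; ring).
  apply integral_le; auto; cont.
Qed.

Lemma abs_integral_le f : cont_on a b f ->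
  Rabs (integral a b f) <= integral a b (fun x => Rabs (f x)).
Proof.
  intros Hf; pose proof (integrable_of_cont_on f Hf) as pf.
  rewrite (integral_RiemannInt _ _ _ pf), (integral_RiemannInt _ _ _ (RiemannInt_P16 pf)).
  apply RiemannInt_P17; auto.
Qed.

Lemma integral_antiderivative f F : cont_on a b f ->
  (forall x, a <= x <= b -> derivable_pt_lim F x (f x)) -> integral a b f = F b - F a.
Proof.
  intros Hf HF.
  rewrite (integral_RiemannInt _ _ _ (integrable_of_cont_on f Hf)),
    (RiemannInt_P20 hab (FTC_P1 hab Hf)).
  set (P := primitive hab (FTC_P1 hab Hf)).
  assert (HP : forall x, a <= x <= b -> derivable_pt_lim P x (f x))
    by (intros; apply RiemannInt_P28; auto).
  destruct (Req_dec a b) as [<- | Hne]; [ring |].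
  destruct (MVT_cor2 (fun x => P x - F x) (fun x => f x - f x) a b) as [c [Hc _]].
  - lra.
  - intros; apply derivable_pt_lim_minus; auto.
  - replace (f c - f c) with 0 in Hc by ring; lra.
Qed.

End Integral.

(** * Moments of the weight (1 - y^2)^k *)

Lemma integral_even_monomial k : integral (-1) 1 (fun x => x ^ (2 * k)) = 2 / (2 * INR k + 1).
Proof.
  assert (Hk : 0 < 2 * INR k + 1) by (pose proof (pos_INR k); lra).
  rewrite (integral_antiderivative _ _ m1_le_1 _ (fun x => x ^ S (2 * k) / (2 * INR k + 1)));
    [| cont |].
  - rewrite pow1, <- tech_pow_Rmult, pow_1_even; field; lra.
  - intros x _.
    replace (x ^ (2 * k)) with (INR (S (2 * k)) * x ^ pred (S (2 * k)) / (2 * INR k + 1))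
      by (rewrite S_INR, mult_INR; simpl; field; lra).
    apply derivable_pt_lim_scal_right, derivable_pt_lim_pow.
Qed.

Definition moment (g : R -> R) (j : nat) : R := integral (-1) 1 (fun y => g y * y ^ j).

Definition weight_moment (k : nat) : nat -> R := moment (fun y => (1 - y ^ 2) ^ k).

Lemma weight_moment_0_0 : weight_moment 0 0 = 2.
Proof.
  unfold weight_moment, moment; rewrite (integral_ext _ _ m1_le_1 _ (fun _ => 1)), integral_const;
    [lra | cont | intros; simpl; ring].
Qed.

Lemma weight_moment_0_1 : weight_moment 0 1 = 0.
Proof.
  unfold weight_moment, moment.
  rewrite (integral_antiderivative _ _ m1_le_1 _ (fun y => y ^ 2 / 2)); [simpl; field | cont |].
  intros x _; replace ((1 - x ^ 2) ^ 0 * x ^ 1) with (INR 2 * x ^ pred 2 * / 2) by (simpl; field).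
  apply derivable_pt_lim_scal_right, derivable_pt_lim_pow.
Qed.

Lemma weight_moment_S k i : weight_moment (S k) i = weight_moment k i - weight_moment k (i + 2).
Proof.
  unfold weight_moment, moment; rewrite <- integral_minus by (auto; cont).
  apply integral_ext; [auto | cont | intros; rewrite pow_add; simpl; ring].
Qed.

(* Integration by parts against d/dy [(1 - y^2)^(k+1) y^(i+1)]. *)
Lemma weight_moment_parts k i :
  (INR i + 1) * weight_moment (S k) i = 2 * (INR k + 1) * weight_moment k (i + 2).
Proof.
  apply Rminus_diag_uniq; unfold weight_moment, moment.
  rewrite <- !integral_scal, <- integral_minus by (auto; cont).
  rewrite (integral_antiderivative _ _ m1_le_1 _ (fun y => (1 - y ^ 2) ^ S k * y ^ (i + 1)));
    [rewrite !pow_add; simpl; ring | cont |].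
  intros x _.
  replace ((INR i + 1) * ((1 - x ^ 2) ^ S k * x ^ i)
           - 2 * (INR k + 1) * ((1 - x ^ 2) ^ k * x ^ (i + 2)))
    with (INR (S k) * (1 - x ^ 2) ^ pred (S k) * (0 - INR 2 * x ^ pred 2) * x ^ (i + 1)
          + (1 - x ^ 2) ^ S k * (INR (i + 1) * x ^ pred (i + 1)))
    by (replace (pred (i + 1)) with i by lia; rewrite !S_INR, !plus_INR, !pow_add; simpl; ring).
  apply (derivable_pt_lim_mult (fun y => (1 - y ^ 2) ^ S k)).
  - apply (derivable_pt_lim_comp (fun y => 1 - y ^ 2) (fun z => z ^ S k)).
    + apply (derivable_pt_lim_minus (fun _ => 1));
        [apply derivable_pt_lim_const | apply derivable_pt_lim_pow].
    + apply derivable_pt_lim_pow.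
  - apply derivable_pt_lim_pow.
Qed.

Lemma weight_moment_S_rec k i :
  (2 * INR k + INR i + 3) * weight_moment (S k) i = 2 * (INR k + 1) * weight_moment k i.
Proof.
  replace (weight_moment k i) with (weight_moment (S k) i + weight_moment k (i + 2))
    by (rewrite weight_moment_S; ring).
  pose proof (weight_moment_parts k i); lra.
Qed.

Lemma weight_moment_shift k i :
  (2 * INR k + INR i + 3) * weight_moment k (i + 2) = (INR i + 1) * weight_moment k i.
Proof.
  assert (Hk : 0 < INR k + 1) by (pose proof (pos_INR k); lra).
  apply (Rmult_eq_reg_l (2 * (INR k + 1))); [| lra].
  transitivity ((INR i + 1) * ((2 * INR k + INR i + 3) * weight_moment (S k) i)).
  - rewrite <- Rmult_assoc, (Rmult_comm (2 * _)), Rmult_assoc, <- weight_moment_parts; ring.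
  - rewrite weight_moment_S_rec; ring.
Qed.

Lemma weight_moment_1 k : weight_moment k 1 = 0.
Proof.
  induction k as [| k IH]; [apply weight_moment_0_1 |].
  pose proof (weight_moment_S_rec k 1) as H; rewrite IH in H.
  pose proof (pos_INR k); simpl in H; nra.
Qed.

Lemma weight_moment_0_pos k : 0 < weight_moment k 0.
Proof.
  induction k as [| k IH]; [rewrite weight_moment_0_0; lra |].
  pose proof (weight_moment_S_rec k 0); pose proof (pos_INR k); simpl in *; nra.
Qed.

Lemma weight_moment_S_eq k i :
  weight_moment (S k) i = 2 * (INR k + 1) / (2 * INR k + INR i + 3) * weight_moment k i.
Proof.
  pose proof (pos_INR k); pose proof (pos_INR i).
  apply (Rmult_eq_reg_l (2 * INR k + INR i + 3)); [rewrite weight_moment_S_rec; field |]; lra.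
Qed.

Lemma weight_moment_SS_eq k i :
  weight_moment k (S (S i)) = (INR i + 1) / (2 * INR k + INR i + 3) * weight_moment k i.
Proof.
  pose proof (pos_INR k); pose proof (pos_INR i).
  replace (S (S i)) with (i + 2)%nat by lia.
  apply (Rmult_eq_reg_l (2 * INR k + INR i + 3)); [rewrite weight_moment_shift; field |]; lra.
Qed.

(** * Moments of the Legendre polynomials *)

Lemma legendre_SS m x : legendre (S (S m)) x =
  ((2 * INR m + 3) * x * legendre (S m) x - (INR m + 1) * legendre m x) / (INR m + 2).
Proof. unfold legendre; simpl; destruct (legendre_pair m x); reflexivity. Qed.

Lemma cont_on_legendre m : cont_on (-1) 1 (legendre m).
Proof.
  enough (H : cont_on (-1) 1 (legendre m) /\ cont_on (-1) 1 (legendre (S m))) by apply H.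
  induction m as [| m [IH0 IH1]].
  - change (legendre 0) with (fun _ : R => 1); change (legendre 1) with (fun x : R => x); split; cont.
  - split; [auto |].
    replace (legendre (S (S m))) with
      (fun x => ((2 * INR m + 3) * x * legendre (S m) x - (INR m + 1) * legendre m x) * / (INR m + 2))
      by (apply functional_extensionality; intros; symmetry; apply legendre_SS).
    cont.
Qed.
#[local] Hint Resolve cont_on_legendre : cont_on.

Definition legendre_moment (k : nat) : nat -> R := moment (legendre k).

Lemma legendre_moment_rec m j : (INR m + 2) * legendre_moment (S (S m)) j =
  (2 * INR m + 3) * legendre_moment (S m) (S j) - (INR m + 1) * legendre_moment m j.
Proof.
  unfold legendre_moment, moment; rewrite <- !integral_scal, <- integral_minus by (auto; cont).
  apply integral_ext; [auto | cont |].
  intros x _; rewrite legendre_SS; simpl; field; pose proof (pos_INR m); lra.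
Qed.

(* Rodrigues' formula and k integrations by parts give
   int P_k y^(k+i) = (k+i)! / (i! 2^k k!) * int (1-y^2)^k y^i;
   here the identity is derived from Bonnet's recurrence instead. *)
Definition rodrigues_coef (k i : nat) : R :=
  INR (fact (k + i)) / (INR (fact i) * 2 ^ k * INR (fact k)).

Lemma rodrigues_coef_0 i : rodrigues_coef 0 i = 1.
Proof. unfold rodrigues_coef; simpl; field; apply not_0_INR, fact_neq_0. Qed.

Lemma rodrigues_coef_S_eq k i :
  rodrigues_coef (S k) i = (INR k + INR i + 1) / (2 * (INR k + 1)) * rodrigues_coef k i.
Proof.
  unfold rodrigues_coef; replace (S k + i)%nat with (S (k + i)) by lia.
  rewrite !fact_simpl, !mult_INR, !S_INR, plus_INR; simpl pow.
  pose proof (INR_fact_pos i); pose proof (INR_fact_pos k); pose proof (INR_S_pos k).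
  pose proof (pow_lt 2 k ltac:(lra)); field; lra.
Qed.

Lemma rodrigues_coef_Si_eq k i :
  rodrigues_coef k (S i) = (INR k + INR i + 1) / (INR i + 1) * rodrigues_coef k i.
Proof.
  unfold rodrigues_coef; replace (k + S i)%nat with (S (k + i)) by lia.
  rewrite !fact_simpl, !mult_INR, !S_INR, plus_INR.
  pose proof (INR_fact_pos i); pose proof (INR_fact_pos k); pose proof (INR_S_pos i).
  pose proof (pow_lt 2 k ltac:(lra)); field; lra.
Qed.

Definition legendre_moment_formula (k : nat) : Prop :=
  (forall j, (j < k)%nat -> legendre_moment k j = 0) /\
  (forall i, legendre_moment k (k + i) = rodrigues_coef k i * weight_moment k i).

Lemma legendre_moment_formula_0 : legendre_moment_formula 0.
Proof.
  split; [intros; lia |].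
  intros i; rewrite rodrigues_coef_0, Rmult_1_l.
  apply integral_ext; [auto | cont | intros; unfold legendre; simpl; ring].
Qed.

Lemma legendre_moment_formula_1 : legendre_moment_formula 1.
Proof.
  split.
  - intros j Hj; replace j with 0%nat by lia; rewrite <- weight_moment_0_1.
    apply integral_ext; [auto | cont | intros; unfold legendre; simpl; ring].
  - intros i; transitivity (weight_moment 0 (S (S i))).
    + apply integral_ext; [auto | cont | intros; unfold legendre; simpl; ring].
    + rewrite weight_moment_SS_eq, rodrigues_coef_S_eq, rodrigues_coef_0, weight_moment_S_eq.
      simpl INR; field; pose proof (pos_INR i); lra.
Qed.

Lemma legendre_moment_formula_SS k :
  legendre_moment_formula k -> legendre_moment_formula (S k) -> legendre_moment_formula (S (S k)).
Proof.
  intros [Z0 E0] [Z1 E1].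
  pose proof (pos_INR k); pose proof (INR_S_pos k).
  split.
  - intros j Hj.
    assert (Hrec := legendre_moment_rec k j).
    enough (Hr : (2 * INR k + 3) * legendre_moment (S k) (S j) - (INR k + 1) * legendre_moment k j = 0)
      by (rewrite Hr in Hrec; apply (Rmult_eq_reg_l (INR k + 2)); lra).
    destruct (Nat.lt_trichotomy j k) as [Hl | [-> | Hg]].
    + rewrite Z1, Z0 by lia; ring.
    + assert (A1 := E1 0%nat); assert (A0 := E0 0%nat); rewrite Nat.add_0_r in A1, A0; rewrite A1, A0.
      rewrite rodrigues_coef_S_eq, weight_moment_S_eq; simpl INR; field; lra.
    + replace j with (S k) by lia.
      assert (A1 := E1 1%nat); assert (A0 := E0 1%nat); rewrite Nat.add_1_r in A1, A0.
      rewrite A1, A0, !weight_moment_1; ring.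
  - intros i.
    assert (Hrec := legendre_moment_rec k (S (S k) + i)).
    replace (S (S (S k) + i)) with (S k + S (S i))%nat in Hrec by lia.
    replace (S (S k) + i)%nat with (k + S (S i))%nat in Hrec at 2 by lia.
    rewrite E0, E1 in Hrec.
    apply (Rmult_eq_reg_l (INR k + 2)); [rewrite Hrec | lra].
    rewrite !rodrigues_coef_S_eq, !rodrigues_coef_Si_eq, !weight_moment_S_eq, !weight_moment_SS_eq.
    rewrite !S_INR; pose proof (pos_INR i); field; repeat split; lra.
Qed.

Lemma legendre_moment_formula_all k : legendre_moment_formula k.
Proof.
  enough (H : legendre_moment_formula k /\ legendre_moment_formula (S k)) by apply H.
  induction k as [| k [IH0 IH1]].
  - split; [apply legendre_moment_formula_0 | apply legendre_moment_formula_1].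
  - split; [auto | apply legendre_moment_formula_SS; auto].
Qed.

(** * Taylor polynomials of A cos + B sin *)

(* The map (A, B) |-> (B, -A) differentiates A cos + B sin, so [trig_coef j A B] is the
   j-th derivative of A cos + B sin at 0. *)
Fixpoint trig_coef (j : nat) (A B : R) : R :=
  match j with O => A | S j' => trig_coef j' B (- A) end.

Definition trig_taylor (N : nat) (A B t : R) : R :=
  sum_f_R0 (fun j => trig_coef j A B / INR (fact j) * t ^ j) N.

Lemma trig_coef_opp j : forall A B, trig_coef j (- A) (- B) = - trig_coef j A B.
Proof. induction j; intros; simpl; auto. Qed.

Lemma trig_coef_oppr j : forall A B, trig_coef j A (- B) = (-1) ^ j * trig_coef j A B.
Proof.
  induction j as [| j IH]; intros; simpl; [ring |].
  rewrite IH, <- (Ropp_involutive A) at 1; rewrite trig_coef_opp; ring.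
Qed.

Lemma trig_coef_add k : forall A B i,
  trig_coef (k + i) A B = trig_coef i (trig_coef k A B) (trig_coef (S k) A B).
Proof. induction k; intros; simpl; auto. Qed.

Lemma trig_coef_invariants k : forall A B,
  trig_coef k A B ^ 2 + trig_coef (S k) A B ^ 2 = A ^ 2 + B ^ 2 /\
  Rabs (trig_coef k A B) + Rabs (trig_coef (S k) A B) = Rabs A + Rabs B.
Proof.
  induction k as [| k IH]; intros A B; [simpl; auto |].
  change (trig_coef (S k) A B) with (trig_coef k B (- A)).
  change (trig_coef (S (S k)) A B) with (trig_coef (S k) B (- A)).
  destruct (IH B (- A)) as [-> ->]; rewrite Rabs_Ropp; split; ring.
Qed.

Lemma trig_taylor_opp N A B t : trig_taylor N A B (- t) = trig_taylor N A (- B) t.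
Proof.
  unfold trig_taylor; apply sum_eq; intros j _.
  replace (- t) with ((-1) * t) by ring; rewrite trig_coef_oppr, Rpow_mult_distr.
  field; apply INR_fact_neq_0.
Qed.

Lemma trig_taylor_0 N A B : trig_taylor N A B 0 = A.
Proof.
  unfold trig_taylor; induction N as [| N IH]; simpl; [field |].
  rewrite IH; ring.
Qed.

Lemma trig_taylor_derive N A B t :
  derivable_pt_lim (trig_taylor (S N) A B) t (trig_taylor N B (- A) t).
Proof.
  replace (trig_taylor N B (- A) t) with
    (sum_f_R0 (fun j => INR (S j) * (trig_coef (S j) A B / INR (fact (S j))) * t ^ j) (pred (S N))).
  - apply (derivable_pt_lim_fs (fun j => trig_coef j A B / INR (fact j))); lia.
  - apply sum_eq; intros j _; simpl trig_coef.
    rewrite fact_simpl, mult_INR; field; split; [apply INR_fact_neq_0 | apply not_0_INR; lia].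
Qed.

Lemma abs_le_of_derivative_bound (g g' : R -> R) (M t : R) (N : nat) : 0 < t -> g 0 = 0 ->
  (forall s, 0 <= s <= t -> derivable_pt_lim g s (g' s)) ->
  (forall s, 0 <= s <= t -> Rabs (g' s) <= M * s ^ N / INR (fact N)) ->
  Rabs (g t) <= M * t ^ S N / INR (fact (S N)).
Proof.
  intros Ht H0 Hd Hb.
  set (p := fun s => M * s ^ S N / INR (fact (S N))).
  assert (Hp : forall s, derivable_pt_lim p s (M * s ^ N / INR (fact N))).
  { intros s; replace (M * s ^ N / INR (fact N))
      with (M * (INR (S N) * s ^ pred (S N)) * / INR (fact (S N))).
    - apply derivable_pt_lim_scal_right, derivable_pt_lim_scal, derivable_pt_lim_pow.
    - rewrite fact_simpl, mult_INR; simpl pred.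
      field; split; [apply INR_fact_neq_0 | apply not_0_INR; lia]. }
  assert (Hp0 : p 0 = 0) by (unfold p; rewrite pow_i by lia; field; apply INR_fact_neq_0).
  apply Rabs_le; split.
  - destruct (MVT_cor2 (fun s => p s + g s) (fun s => M * s ^ N / INR (fact N) + g' s) 0 t)
      as [c [Hc Hct]]; auto.
    + intros; apply derivable_pt_lim_plus; auto.
    + rewrite Hp0, H0 in Hc; destruct (Rabs_le_inv _ _ (Hb c ltac:(lra))).
      assert (0 <= (M * c ^ N / INR (fact N) + g' c) * (t - 0)) by (apply Rmult_le_pos; lra).
      unfold p in Hc; lra.
  - destruct (MVT_cor2 (fun s => p s - g s) (fun s => M * s ^ N / INR (fact N) - g' s) 0 t)
      as [c [Hc Hct]]; auto.
    + intros; apply derivable_pt_lim_minus; auto.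
    + rewrite Hp0, H0 in Hc; destruct (Rabs_le_inv _ _ (Hb c ltac:(lra))).
      assert (0 <= (M * c ^ N / INR (fact N) - g' c) * (t - 0)) by (apply Rmult_le_pos; lra).
      unfold p in Hc; lra.
Qed.

Lemma trig_comb_abs_le_sqrt A B t : Rabs (A * cos t + B * sin t) <= sqrt (A ^ 2 + B ^ 2).
Proof.
  rewrite <- sqrt_Rsqr_abs; apply sqrt_le_1_alt.
  pose proof (sin2_cos2 t); pose proof (Rle_0_sqr (A * sin t - B * cos t)); unfold Rsqr in *.
  replace (A ^ 2 + B ^ 2) with ((A ^ 2 + B ^ 2) * (sin t * sin t + cos t * cos t)) by (rewrite H; ring).
  nra.
Qed.

Lemma trig_comb_abs_le A B t : Rabs (A * cos t + B * sin t) <= Rabs A + Rabs B.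
Proof.
  eapply Rle_trans; [apply Rabs_triang |]; rewrite !Rabs_mult.
  assert (Rabs (cos t) <= 1) by (apply Rabs_le, COS_bound).
  assert (Rabs (sin t) <= 1) by (apply Rabs_le, SIN_bound).
  pose proof (Rabs_pos A); pose proof (Rabs_pos B); pose proof (Rabs_pos (cos t));
    pose proof (Rabs_pos (sin t)); nra.
Qed.

Lemma trig_taylor_remainder_pos N : forall A B t, 0 < t ->
  Rabs (A * cos t + B * sin t - trig_taylor N A B t)
    <= (Rabs A + Rabs B) * t ^ S N / INR (fact (S N)).
Proof.
  assert (Hd : forall A B s,
    derivable_pt_lim (fun s => A * cos s + B * sin s) s (B * cos s + - A * sin s)).
  { intros; replace (B * cos s + - A * sin s) with (A * - sin s + B * cos s) by ring.
    apply derivable_pt_lim_plus; apply derivable_pt_lim_scal;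
      [apply derivable_pt_lim_cos | apply derivable_pt_lim_sin]. }
  induction N as [| N IH]; intros A B t Ht.
  - apply (abs_le_of_derivative_bound (fun s => A * cos s + B * sin s - trig_taylor 0 A B s)
      (fun s => B * cos s + - A * sin s - 0)); auto.
    + rewrite trig_taylor_0, cos_0, sin_0; ring.
    + intros s _; apply derivable_pt_lim_minus; [apply Hd |].
      unfold trig_taylor; simpl; apply derivable_pt_lim_const.
    + intros s _; rewrite Rminus_0_r; simpl; unfold Rdiv; rewrite Rinv_1, !Rmult_1_r.
      eapply Rle_trans; [apply trig_comb_abs_le | rewrite Rabs_Ropp; lra].
  - apply (abs_le_of_derivative_bound (fun s => A * cos s + B * sin s - trig_taylor (S N) A B s)
      (fun s => B * cos s + - A * sin s - trig_taylor N B (- A) s)); auto.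
    + rewrite trig_taylor_0, cos_0, sin_0; ring.
    + intros s _; apply derivable_pt_lim_minus; [apply Hd | apply trig_taylor_derive].
    + intros s Hs; destruct (Req_dec s 0) as [-> | Hs0].
      * rewrite trig_taylor_0, cos_0, sin_0, pow_i by lia.
        replace (B * 1 + - A * 0 - B) with 0 by ring; rewrite Rabs_R0; unfold Rdiv; lra.
      * rewrite (Rplus_comm (Rabs A)), <- (Rabs_Ropp A); apply IH; lra.
Qed.

Lemma trig_taylor_remainder N A B t :
  Rabs (A * cos t + B * sin t - trig_taylor N A B t)
    <= (Rabs A + Rabs B) * Rabs t ^ S N / INR (fact (S N)).
Proof.
  destruct (Rtotal_order t 0) as [Hn | [-> | Hp]].
  - rewrite <- (Ropp_involutive t), trig_taylor_opp, cos_neg, sin_neg, Rabs_Ropp,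
      (Rabs_right (- t)) by lra.
    rewrite <- (Rabs_Ropp B).
    replace (A * cos (- t) + B * - sin (- t)) with (A * cos (- t) + - B * sin (- t)) by ring.
    apply trig_taylor_remainder_pos; lra.
  - rewrite trig_taylor_0, cos_0, sin_0, Rabs_R0, pow_i by lia.
    replace (A * 1 + B * 0 - A) with 0 by ring; rewrite Rabs_R0; unfold Rdiv; lra.
  - rewrite (Rabs_right t) by lra; apply trig_taylor_remainder_pos; lra.
Qed.

(** * Integrating the truncated kernel *)

Definition taylor_coef (A B c : R) (j : nat) : R := trig_coef j A B / INR (fact j) * c ^ j.

Definition taylor_err (A B c : R) (N : nat) : R := (Rabs A + Rabs B) * c ^ S N / INR (fact (S N)).

Lemma taylor_err_ge0 A B c N : 0 <= c -> 0 <= taylor_err A B c N.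
Proof.
  intros Hc; unfold taylor_err; pose proof (Rabs_pos A); pose proof (Rabs_pos B).
  apply Rmult_le_pos; [apply Rmult_le_pos; [lra | apply pow_le; lra] |].
  left; apply Rinv_0_lt_compat, INR_fact_pos.
Qed.

Lemma trig_taylor_scaled N A B c t :
  trig_taylor N A B (c * t) = sum_f_R0 (fun j => taylor_coef A B c j * t ^ j) N.
Proof. apply sum_eq; intros j _; unfold taylor_coef; rewrite Rpow_mult_distr; ring. Qed.

Lemma trig_taylor_remainder_scaled N A B c x y : 0 <= c -> -1 <= x <= 1 -> -1 <= y <= 1 ->
  Rabs (A * cos (c * x * y) + B * sin (c * x * y) - trig_taylor N A B (c * x * y))
    <= taylor_err A B c N.
Proof.
  intros Hc Hx Hy; eapply Rle_trans; [apply trig_taylor_remainder |].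
  unfold taylor_err, Rdiv; apply Rmult_le_compat_r; [left; apply Rinv_0_lt_compat, INR_fact_pos |].
  apply Rmult_le_compat_l; [pose proof (Rabs_pos A); pose proof (Rabs_pos B); lra |].
  apply pow_incr; split; [apply Rabs_pos |].
  rewrite Rmult_assoc, Rabs_mult, (Rabs_right c) by lra.
  rewrite <- (Rmult_1_r c) at 2; apply Rmult_le_compat_l; [lra |].
  apply abs_le_1_mult; apply Rabs_le; lra.
Qed.

Lemma cont_on_cos_scaled a b s : cont_on a b (fun y => cos (s * y)).
Proof. apply cont_on_continuity, derivable_continuous; reg. Qed.

Lemma cont_on_sin_scaled a b s : cont_on a b (fun y => sin (s * y)).
Proof. apply cont_on_continuity, derivable_continuous; reg. Qed.
#[local] Hint Resolve cont_on_cos_scaled cont_on_sin_scaled : cont_on.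

Lemma integral_mul_poly f (e : nat -> R) N : cont_on (-1) 1 f ->
  integral (-1) 1 (fun x => f x * sum_f_R0 (fun j => e j * x ^ j) N)
    = sum_f_R0 (fun j => e j * moment f j) N.
Proof.
  intros Hf.
  rewrite (integral_ext _ _ m1_le_1 _ (fun x => sum_f_R0 (fun j => e j * (f x * x ^ j)) N)).
  - rewrite integral_sum by (auto; intros; cont).
    apply sum_eq; intros j _; unfold moment; rewrite integral_scal; auto; cont.
  - cont.
  - intros x _; induction N as [| N IH]; simpl; [ring | rewrite <- IH; ring].
Qed.

Lemma integral_trig_taylor g N A B c x : cont_on (-1) 1 g ->
  integral (-1) 1 (fun y => g y * trig_taylor N A B (c * x * y))
    = sum_f_R0 (fun j => taylor_coef A B c j * moment g j * x ^ j) N.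
Proof.
  intros Hg.
  rewrite (integral_ext _ _ m1_le_1 _
    (fun y => g y * sum_f_R0 (fun j => (taylor_coef A B c j * x ^ j) * y ^ j) N)).
  - rewrite integral_mul_poly by auto; apply sum_eq; intros; ring.
  - unfold trig_taylor; cont.
  - intros y _; rewrite Rmult_assoc, trig_taylor_scaled; f_equal.
    apply sum_eq; intros; rewrite Rpow_mult_distr; ring.
Qed.

Lemma integral_mul_abs_le f h E : cont_on (-1) 1 f -> cont_on (-1) 1 h ->
  (forall x, -1 <= x <= 1 -> Rabs (h x) <= E) ->
  Rabs (integral (-1) 1 (fun x => f x * h x)) <= integral (-1) 1 (fun x => Rabs (f x)) * E.
Proof.
  intros Hf Hh HE; eapply Rle_trans; [apply abs_integral_le; auto; cont |].
  rewrite Rmult_comm, <- integral_scal by (auto; cont).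
  apply integral_le; auto; try cont.
  intros x Hx; rewrite Rabs_mult, Rmult_comm; apply Rmult_le_compat_r; auto using Rabs_pos.
Qed.

Lemma integral_trig_taylor_error g N A B c x : cont_on (-1) 1 g -> 0 <= c -> -1 <= x <= 1 ->
  Rabs (integral (-1) 1 (fun y => g y * (A * cos (c * x * y) + B * sin (c * x * y)))
        - sum_f_R0 (fun j => taylor_coef A B c j * moment g j * x ^ j) N)
    <= integral (-1) 1 (fun y => Rabs (g y)) * taylor_err A B c N.
Proof.
  intros Hg Hc Hx.
  rewrite <- integral_trig_taylor, <- integral_minus by (auto; unfold trig_taylor; cont).
  rewrite (integral_ext _ _ m1_le_1 _
    (fun y => g y * (A * cos (c * x * y) + B * sin (c * x * y) - trig_taylor N A B (c * x * y)))).
  - apply integral_mul_abs_le; auto; [unfold trig_taylor; cont |].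
    intros y Hy; apply trig_taylor_remainder_scaled; auto.
  - unfold trig_taylor; cont.
  - intros; ring.
Qed.

Lemma weight_taylor_poly_bound A B c k M x : 0 <= c -> -1 <= x <= 1 ->
  Rabs (sum_f_R0 (fun i => taylor_coef A B c i * weight_moment k i * x ^ i) M)
    <= (sqrt (A ^ 2 + B ^ 2) + taylor_err A B c M) * weight_moment k 0.
Proof.
  intros Hc Hx.
  unfold weight_moment; rewrite <- integral_trig_taylor by cont.
  replace (moment _ 0) with (integral (-1) 1 (fun y => Rabs ((1 - y ^ 2) ^ k))).
  - rewrite (Rmult_comm (sqrt _ + _)); apply integral_mul_abs_le; [cont | unfold trig_taylor; cont |].
    intros y Hy.
    replace (trig_taylor M A B (c * x * y)) with
      ((A * cos (c * x * y) + B * sin (c * x * y))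
       + - (A * cos (c * x * y) + B * sin (c * x * y) - trig_taylor M A B (c * x * y))) by ring.
    eapply Rle_trans; [apply Rabs_triang |].
    apply Rplus_le_compat; [apply trig_comb_abs_le_sqrt |].
    rewrite Rabs_Ropp; apply trig_taylor_remainder_scaled; auto.
  - unfold moment; apply integral_ext; [auto | cont |].
    intros y Hy; rewrite Rabs_pos_eq; [simpl; ring |].
    apply pow_le; simpl; nra.
Qed.

Lemma integral_abs_mul_le_amgm f g L : cont_on (-1) 1 f -> cont_on (-1) 1 g -> 0 < L ->
  2 * integral (-1) 1 (fun x => Rabs (f x * g x))
    <= L * integral (-1) 1 (fun x => g x ^ 2) + / L * integral (-1) 1 (fun x => f x ^ 2).
Proof.
  intros Hf Hg HL.
  rewrite <- !integral_scal, <- integral_plus by (auto; cont).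
  apply integral_le; auto; try cont.
  intros x _; rewrite Rabs_mult.
  apply (Rmult_le_reg_l L); auto.
  replace (L * (L * g x ^ 2 + / L * f x ^ 2)) with (L * L * Rabs (g x) ^ 2 + Rabs (f x) ^ 2)
    by (rewrite !pow2_abs; field; lra).
  pose proof (pow2_ge_0 (L * Rabs (g x) - Rabs (f x))); nra.
Qed.

Lemma integral_abs_monomial_mul_le psi k : cont_on (-1) 1 psi ->
  integral (-1) 1 (fun y => psi y ^ 2) = 1 ->
  integral (-1) 1 (fun x => Rabs (x ^ k * psi x)) <= sqrt (2 / (2 * INR k + 1)).
Proof.
  intros Hpsi Hn.
  assert (Hk : 0 < 2 / (2 * INR k + 1)) by (pose proof (pos_INR k); apply Rdiv_lt_0_compat; lra).
  set (L := sqrt (2 / (2 * INR k + 1))).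
  assert (HL : 0 < L) by (apply sqrt_lt_R0; auto).
  assert (HL2 : L * L = 2 / (2 * INR k + 1)) by (apply sqrt_sqrt; lra).
  pose proof (integral_abs_mul_le_amgm (fun x => x ^ k) psi L ltac:(cont) Hpsi HL) as H.
  rewrite Hn in H.
  replace (integral (-1) 1 (fun x => (x ^ k) ^ 2)) with (L * L) in H.
  - replace (L * 1 + / L * (L * L)) with (2 * L) in H by (field; lra); lra.
  - rewrite HL2, <- integral_even_monomial; apply integral_ext; [auto | cont |].
    intros; rewrite <- pow_mult; f_equal; lia.
Qed.

Lemma cont_on_Pbar k : cont_on (-1) 1 (Pbar k).
Proof. unfold Pbar; cont. Qed.
#[local] Hint Resolve cont_on_Pbar : cont_on.

Lemma sum_f_R0_skip_zeros (F : nat -> R) k M : (forall j, (j < k)%nat -> F j = 0) ->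
  sum_f_R0 F (k + M) = sum_f_R0 (fun i => F (k + i)%nat) M.
Proof.
  intros HZ.
  assert (H0 : forall n, (n < k)%nat -> sum_f_R0 F n = 0).
  { induction n; intros; simpl; [apply HZ; lia | rewrite IHn, HZ by lia; ring]. }
  induction M as [| M IH].
  - destruct k; [reflexivity |]; simpl; rewrite H0, Nat.add_0_r by lia; ring.
  - rewrite Nat.add_succ_r; simpl; rewrite IH, Nat.add_succ_r; reflexivity.
Qed.

Lemma integral_Pbar_taylor_poly k M a b c (v : nat -> R) :
  integral (-1) 1 (fun x => Pbar k x * sum_f_R0 (fun j => taylor_coef a b c j * v j * x ^ j) (k + M))
  = sqrt (INR k + / 2) * c ^ k / (2 ^ k * INR (fact k)) *
    sum_f_R0 (fun i => taylor_coef (trig_coef k a b) (trig_coef (S k) a b) c i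
                       * weight_moment k i * v (k + i)%nat) M.
Proof.
  destruct (legendre_moment_formula_all k) as [Hlt Hadd].
  assert (HP : forall j, moment (Pbar k) j = sqrt (INR k + / 2) * legendre_moment k j).
  { intros j; unfold legendre_moment, moment, Pbar; rewrite <- integral_scal by (auto; cont).
    apply integral_ext; [auto | cont | intros; ring]. }
  rewrite integral_mul_poly by cont.
  rewrite sum_f_R0_skip_zeros by (intros j Hj; rewrite HP, Hlt by auto; ring).
  rewrite scal_sum; apply sum_eq; intros i _.
  rewrite HP, Hadd; unfold taylor_coef, rodrigues_coef.
  rewrite <- trig_coef_add, pow_add.
  pose proof (INR_fact_pos k); pose proof (INR_fact_pos i); pose proof (INR_fact_pos (k + i)).
  pose proof (pow_lt 2 k ltac:(lra)); field; lra.
Qed.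

(** * The Legendre coefficients of an eigenfunction *)

Definition legendre_coef_bound (c : R) (k : nat) : R :=
  c ^ k * weight_moment k 0 / (2 ^ k * INR (fact k)).

Lemma legendre_coef_bound_ge0 c k : 0 <= c -> 0 <= legendre_coef_bound c k.
Proof.
  intros Hc; unfold legendre_coef_bound.
  pose proof (weight_moment_0_pos k); pose proof (INR_fact_pos k); pose proof (pow_lt 2 k ltac:(lra)).
  apply Rmult_le_pos; [apply Rmult_le_pos; [apply pow_le |] |];
    [| | left; apply Rinv_0_lt_compat, Rmult_lt_0_compat]; lra.
Qed.

Lemma sqrt_Pbar_scale k : sqrt (INR k + / 2) * sqrt (2 / (2 * INR k + 1)) = 1.
Proof.
  pose proof (pos_INR k).
  rewrite <- sqrt_mult by (try apply Rlt_le, Rdiv_lt_0_compat; lra).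
  replace ((INR k + / 2) * (2 / (2 * INR k + 1))) with 1 by (field; lra); apply sqrt_1.
Qed.

Lemma taylor_err_trig_coef k A B c M :
  taylor_err (trig_coef k A B) (trig_coef (S k) A B) c M = taylor_err A B c M.
Proof. unfold taylor_err; destruct (trig_coef_invariants k A B) as [_ ->]; reflexivity. Qed.

Lemma abs_integral_Pbar_taylor_le psi k a b c M : 0 <= c -> cont_on (-1) 1 psi ->
  integral (-1) 1 (fun y => psi y ^ 2) = 1 ->
  Rabs (integral (-1) 1 (fun x => Pbar k x *
          sum_f_R0 (fun j => taylor_coef a b c j * moment psi j * x ^ j) (k + M)))
    <= legendre_coef_bound c k * (sqrt (a ^ 2 + b ^ 2) + taylor_err a b c M).
Proof.
  intros Hc Hpsi Hn.
  rewrite integral_Pbar_taylor_poly.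
  set (A := trig_coef k a b); set (B := trig_coef (S k) a b).
  assert (Hm : forall i, moment psi (k + i) = moment (fun x => x ^ k * psi x) i).
  { intros i; unfold moment; apply integral_ext; [auto | cont | intros; rewrite pow_add; ring]. }
  rewrite (sum_eq _ (fun i => (taylor_coef A B c i * weight_moment k i)
                              * moment (fun x => x ^ k * psi x) i))
    by (intros; rewrite Hm; ring).
  rewrite <- integral_mul_poly by cont.
  assert (Hw : integral (-1) 1 (fun x => Rabs (x ^ k * psi x)) <= sqrt (2 / (2 * INR k + 1)))
    by (apply integral_abs_monomial_mul_le; auto).
  assert (Hpoly : Rabs (integral (-1) 1 (fun x => x ^ k * psi x *
                   sum_f_R0 (fun i => taylor_coef A B c i * weight_moment k i * x ^ i) M))
     <= sqrt (2 / (2 * INR k + 1)) * ((sqrt (a ^ 2 + b ^ 2) + taylor_err a b c M) * weight_moment k 0)).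
  { eapply Rle_trans; [apply integral_mul_abs_le; [cont | cont |] |].
    - intros x Hx; eapply Rle_trans; [apply weight_taylor_poly_bound; auto |].
      unfold A, B; rewrite taylor_err_trig_coef; destruct (trig_coef_invariants k a b) as [-> _].
      apply Rle_refl.
    - apply Rmult_le_compat_r; auto.
      apply Rmult_le_pos; [| left; apply weight_moment_0_pos].
      pose proof (sqrt_pos (a ^ 2 + b ^ 2)); pose proof (taylor_err_ge0 a b c M Hc); lra. }
  assert (Hs : 0 <= sqrt (INR k + / 2) * c ^ k / (2 ^ k * INR (fact k))).
  { pose proof (INR_fact_pos k); pose proof (pow_lt 2 k ltac:(lra)).
    apply Rmult_le_pos; [apply Rmult_le_pos; [apply sqrt_pos | apply pow_le; lra] |].
    left; apply Rinv_0_lt_compat, Rmult_lt_0_compat; lra. }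
  rewrite Rabs_mult, (Rabs_pos_eq _ Hs).
  eapply Rle_trans; [apply Rmult_le_compat_l; [exact Hs | exact Hpoly] |].
  right; transitivity (sqrt (INR k + / 2) * sqrt (2 / (2 * INR k + 1)) *
    (legendre_coef_bound c k * (sqrt (a ^ 2 + b ^ 2) + taylor_err a b c M))).
  - unfold legendre_coef_bound; pose proof (INR_fact_pos k); pose proof (pow_lt 2 k ltac:(lra)).
    field; lra.
  - rewrite sqrt_Pbar_scale; ring.
Qed.

Lemma sq_le_legendre_coef_bound_taylor psi k a b c (Q : R -> R) M : 0 <= c ->
  cont_on (-1) 1 psi -> integral (-1) 1 (fun y => psi y ^ 2) = 1 -> cont_on (-1) 1 Q ->
  (forall x, -1 <= x <= 1 ->
     integral (-1) 1 (fun y => psi y * (a * cos (c * x * y) + b * sin (c * x * y))) = Q x) ->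
  a ^ 2 + b ^ 2 = integral (-1) 1 (fun x => Pbar k x * Q x) ->
  a ^ 2 + b ^ 2 <= legendre_coef_bound c k * (sqrt (a ^ 2 + b ^ 2) + taylor_err a b c M)
    + integral (-1) 1 (fun x => Rabs (Pbar k x)) * integral (-1) 1 (fun y => Rabs (psi y))
      * taylor_err a b c (k + M).
Proof.
  intros Hc Hpsi Hn HCQ HQ Hab.
  set (QN := fun x => sum_f_R0 (fun j => taylor_coef a b c j * moment psi j * x ^ j) (k + M)).
  assert (HCQN : cont_on (-1) 1 QN) by (unfold QN; cont).
  assert (Happrox : Rabs (a ^ 2 + b ^ 2 - integral (-1) 1 (fun x => Pbar k x * QN x))
    <= integral (-1) 1 (fun x => Rabs (Pbar k x))
       * (integral (-1) 1 (fun y => Rabs (psi y)) * taylor_err a b c (k + M))).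
  { rewrite Hab, <- integral_minus by cont.
    rewrite (integral_ext _ _ m1_le_1 _ (fun x => Pbar k x * (Q x - QN x))) by (cont || intros; ring).
    apply integral_mul_abs_le; [cont | cont |].
    intros x Hx; rewrite <- HQ by auto; apply integral_trig_taylor_error; auto. }
  pose proof (abs_integral_Pbar_taylor_le psi k a b c M Hc Hpsi Hn) as Hmain; unfold QN in Happrox.
  rewrite Rmult_assoc.
  apply Rabs_le_inv in Happrox; apply Rabs_le_inv in Hmain; lra.
Qed.

Lemma taylor_err_cv A B c : Un_cv (taylor_err A B c) 0.
Proof.
  replace 0 with ((Rabs A + Rabs B) * 0) by ring.
  apply (Un_cv_ext (fun N => (Rabs A + Rabs B) * (c ^ (N + 1) / INR (fact (N + 1))))).
  - intros N; unfold taylor_err; rewrite Nat.add_1_r; field; apply INR_fact_neq_0.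
  - apply CV_mult; [apply Un_cv_const |].
    apply (CV_shift' (fun n => c ^ n / INR (fact n))), cv_speed_pow_fact.
Qed.

Lemma le_of_sq_le_vanishing r B D (e : nat -> R) k : 0 <= r -> 0 <= B -> Un_cv e 0 ->
  (forall M, r * r <= B * (r + e M) + D * e (k + M)%nat) -> r <= B.
Proof.
  intros Hr HB He H.
  assert (Hsq : r * r <= B * (r + 0) + D * 0).
  { apply Rle_cv_lim with (Un := fun _ => r * r) (Vn := fun M => B * (r + e M) + D * e (k + M)%nat);
      auto.
    - apply Un_cv_const.
    - apply CV_plus; apply CV_mult; try apply Un_cv_const.
      + apply (CV_plus (fun _ => r)); [apply Un_cv_const | auto].
      + apply (Un_cv_ext (fun M => e (M + k)%nat)); [intros; rewrite Nat.add_comm; reflexivity |].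
        apply CV_shift'; auto. }
  destruct Hr as [Hr | <-]; [apply (Rmult_le_reg_l r); lra | lra].
Qed.

Lemma prolate_legendre_coef_le c psi mr mi k : 0 < c -> prolate_eigen c psi mr mi ->
  Rabs (integral (-1) 1 (fun x => Pbar k x * psi x)) * sqrt (mr ^ 2 + mi ^ 2)
    <= legendre_coef_bound c k.
Proof.
  intros hc [Hpsi [[prn Hn] [Hcos Hsin]]].
  rewrite <- (integral_RiemannInt _ _ _ prn) in Hn.
  set (beta := integral (-1) 1 (fun x => Pbar k x * psi x)).
  set (a := mr * beta); set (b := mi * beta).
  set (Q := fun x => (a * mr + b * mi) * psi x).
  assert (HQ : forall x, -1 <= x <= 1 ->
    integral (-1) 1 (fun y => psi y * (a * cos (c * x * y) + b * sin (c * x * y))) = Q x).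
  { intros x Hx; destruct (Hcos x Hx) as [pc Hc]; destruct (Hsin x Hx) as [ps Hs].
    rewrite <- integral_RiemannInt in Hc, Hs.
    rewrite (integral_ext _ _ m1_le_1 _
      (fun y => a * (cos (c * x * y) * psi y) + b * (sin (c * x * y) * psi y))).
    - rewrite integral_plus, !integral_scal, Hc, Hs by cont; unfold Q; ring.
    - cont.
    - intros; ring. }
  assert (Hab : a ^ 2 + b ^ 2 = integral (-1) 1 (fun x => Pbar k x * Q x)).
  { unfold Q; rewrite (integral_ext _ _ m1_le_1 _ (fun x => (a * mr + b * mi) * (Pbar k x * psi x)))
      by (cont || intros; ring).
    rewrite integral_scal by cont; fold beta; unfold a, b; ring. }
  assert (Hr : sqrt (a ^ 2 + b ^ 2) = Rabs beta * sqrt (mr ^ 2 + mi ^ 2)).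
  { rewrite <- sqrt_Rsqr_abs, <- sqrt_mult by (apply Rle_0_sqr || nra).
    f_equal; unfold a, b, Rsqr; ring. }
  rewrite <- Hr.
  apply (le_of_sq_le_vanishing _ _
    (integral (-1) 1 (fun x => Rabs (Pbar k x)) * integral (-1) 1 (fun y => Rabs (psi y)))
    (taylor_err a b c) k); auto using sqrt_pos, legendre_coef_bound_ge0, taylor_err_cv with real.
  intros M; rewrite sqrt_sqrt by nra.
  apply (sq_le_legendre_coef_bound_taylor psi k a b c Q M); auto with real; unfold Q; cont.
Qed.

(** * Wallis integrals *)

Lemma PI2_ge0 : 0 <= PI / 2.
Proof. pose proof PI_RGT_0; lra. Qed.

Definition wallis (p : nat) : R := integral 0 (PI / 2) (fun x => sin x ^ p).

Lemma cont_on_sin_pow a b p : cont_on a b (fun x => sin x ^ p).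
Proof. apply cont_on_pow, cont_on_continuity, continuity_sin. Qed.
#[local] Hint Resolve cont_on_sin_pow : cont_on.

Lemma wallis_0 : wallis 0 = PI / 2.
Proof.
  unfold wallis; rewrite (integral_ext _ _ PI2_ge0 _ (fun _ => 1)), integral_const;
    [ring | cont | intros; reflexivity].
Qed.

Lemma wallis_1 : wallis 1 = 1.
Proof.
  unfold wallis; rewrite (integral_antiderivative _ _ PI2_ge0 _ (fun x => - cos x)).
  - rewrite cos_PI2, cos_0; ring.
  - cont.
  - intros x _; rewrite pow_1, <- (Ropp_involutive (sin x)).
    apply derivable_pt_lim_opp, derivable_pt_lim_cos.
Qed.

(* Integration by parts against d/dx [cos x sin^(p+1) x]. *)
Lemma wallis_rec p : (INR p + 2) * wallis (S (S p)) = (INR p + 1) * wallis p.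
Proof.
  apply Rminus_diag_uniq; unfold wallis.
  rewrite <- !integral_scal, <- integral_minus by (auto using PI2_ge0; cont).
  rewrite (integral_antiderivative _ _ PI2_ge0 _ (fun x => - (cos x * sin x ^ S p))).
  - rewrite cos_PI2, sin_0, pow_i by lia; ring.
  - cont.
  - intros x _.
    replace ((INR p + 2) * sin x ^ S (S p) - (INR p + 1) * sin x ^ p) with
      (- (- sin x * sin x ^ S p + cos x * (INR (S p) * sin x ^ pred (S p) * cos x))).
    + apply derivable_pt_lim_opp, (derivable_pt_lim_mult cos (fun x => sin x ^ S p));
        [apply derivable_pt_lim_cos |].
      apply (derivable_pt_lim_comp sin (fun y => y ^ S p));
        [apply derivable_pt_lim_sin | apply derivable_pt_lim_pow].
    + pose proof (sin2_cos2 x) as H; unfold Rsqr in H.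
      apply Rminus_diag_uniq; rewrite S_INR; simpl pred.
      match goal with |- ?u - ?v = 0 =>
        replace (u - v) with ((INR p + 1) * sin x ^ p * (1 - (sin x * sin x + cos x * cos x)))
          by (simpl; ring) end.
      rewrite H; ring.
Qed.

Lemma wallis_S_le p : wallis (S p) <= wallis p.
Proof.
  unfold wallis; apply integral_le; auto using PI2_ge0; try cont.
  intros x Hx.
  assert (0 <= sin x) by (apply sin_ge_0; pose proof PI_RGT_0; lra).
  pose proof (SIN_bound x); pose proof (pow_le (sin x) p ltac:(lra)); simpl; nra.
Qed.

Lemma wallis_ge0 p : 0 <= wallis p.
Proof.
  unfold wallis; apply integral_ge0; auto using PI2_ge0; try cont.
  intros x Hx; apply pow_le, sin_ge_0; pose proof PI_RGT_0; lra.
Qed.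

Lemma wallis_prod p : (INR p + 1) * wallis p * wallis (S p) = PI / 2.
Proof.
  induction p as [| p IH]; [simpl; rewrite wallis_0, wallis_1; ring |].
  rewrite <- IH, S_INR.
  replace ((INR p + 1 + 1) * wallis (S p) * wallis (S (S p)))
    with (wallis (S p) * ((INR p + 2) * wallis (S (S p)))) by ring.
  rewrite wallis_rec; ring.
Qed.

Lemma wallis_pos p : 0 < wallis p.
Proof.
  pose proof (wallis_prod p); pose proof (wallis_ge0 p); pose proof PI_RGT_0.
  destruct (wallis_ge0 p) as [| Hz]; auto; rewrite <- Hz in *; lra.
Qed.

Lemma wallis_sq_le p : (INR p + 1) * wallis (S p) ^ 2 <= PI / 2.
Proof.
  pose proof (pos_INR p); pose proof (wallis_pos (S p)).
  rewrite <- (wallis_prod p).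
  replace ((INR p + 1) * wallis (S p) ^ 2) with ((INR p + 1) * wallis (S p) * wallis (S p)) by ring.
  replace ((INR p + 1) * wallis p * wallis (S p)) with ((INR p + 1) * wallis (S p) * wallis p) by ring.
  apply Rmult_le_compat_l; [apply Rmult_le_pos; lra | apply wallis_S_le].
Qed.

Lemma wallis_sq_ge p : PI / 2 <= (INR p + 1) * wallis p ^ 2.
Proof.
  rewrite <- (wallis_prod p).
  replace ((INR p + 1) * wallis p ^ 2) with ((INR p + 1) * wallis p * wallis p) by ring.
  apply Rmult_le_compat_l; [| apply wallis_S_le].
  apply Rmult_le_pos; [pose proof (pos_INR p); lra | apply wallis_ge0].
Qed.

Lemma weight_moment_0_wallis k : weight_moment k 0 = 2 * wallis (2 * k + 1).
Proof.
  induction k as [| k IH]; [simpl; rewrite weight_moment_0_0, wallis_1; ring |].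
  pose proof (wallis_rec (2 * k + 1)) as Hw; pose proof (pos_INR k).
  replace (INR (2 * k + 1)) with (2 * INR k + 1) in Hw by (rewrite plus_INR, mult_INR; simpl; ring).
  replace (2 * S k + 1)%nat with (S (S (2 * k + 1))) by lia.
  rewrite weight_moment_S_eq, IH; simpl INR.
  apply (Rmult_eq_reg_l (2 * INR k + 1 + 2)); [| lra].
  replace ((2 * INR k + 1 + 2) * (2 * wallis (S (S (2 * k + 1)))))
    with (2 * ((2 * INR k + 1 + 2) * wallis (S (S (2 * k + 1))))) by ring.
  rewrite Hw; field; lra.
Qed.

(** * Gauss's product for Gamma(k + 3/2) *)

Lemma INR_double_add k n m : INR (2 * k + 2 * n + m) = 2 * INR k + 2 * INR n + INR m.
Proof. rewrite !plus_INR, !mult_INR; simpl; ring. Qed.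

Lemma rising_prod_wallis k n :
  rising_prod (INR k + 3 / 2) n * wallis (2 * k + 2 * n + 3)
    = rising_prod (INR k + 1) n * wallis (2 * k + 1).
Proof.
  induction n as [| n IH]; cbn [rising_prod].
  - pose proof (wallis_rec (2 * k + 1)) as H.
    replace (S (S (2 * k + 1))) with (2 * k + 2 * 0 + 3)%nat in H by lia.
    replace (INR (2 * k + 1)) with (2 * INR k + 1) in H by (rewrite plus_INR, mult_INR; simpl; ring).
    apply (Rmult_eq_reg_l 2); [lra | lra].
  - pose proof (wallis_rec (2 * k + 2 * n + 3)) as H.
    replace (S (S (2 * k + 2 * n + 3))) with (2 * k + 2 * S n + 3)%nat in H by lia.
    rewrite INR_double_add in H; rewrite S_INR.
    replace (rising_prod (INR k + 3 / 2) n * (INR k + 3 / 2 + (INR n + 1))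
             * wallis (2 * k + 2 * S n + 3))
      with (rising_prod (INR k + 3 / 2) n
            * (/ 2 * ((2 * INR k + 2 * INR n + INR 3 + 2) * wallis (2 * k + 2 * S n + 3))))
      by (simpl; field).
    rewrite H, <- Rmult_assoc.
    replace (rising_prod (INR k + 1) n * (INR k + 1 + (INR n + 1)) * wallis (2 * k + 1))
      with ((INR k + 1 + (INR n + 1)) * (rising_prod (INR k + 1) n * wallis (2 * k + 1))) by ring.
    rewrite <- IH; simpl; field.
Qed.

Lemma rising_prod_pos s n : 0 < s -> 0 < rising_prod s n.
Proof.
  intros Hs; induction n as [| n IH]; cbn [rising_prod]; auto.
  pose proof (pos_INR (S n)); apply Rmult_lt_0_compat; lra.
Qed.

Lemma fact_mul_rising_prod m n : INR (fact m) * rising_prod (INR m + 1) n = INR (fact (m + n + 1)).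
Proof.
  induction n as [| n IH]; cbn [rising_prod].
  - rewrite Nat.add_0_r, Nat.add_1_r, fact_simpl, mult_INR, S_INR; ring.
  - replace (m + S n + 1)%nat with (S (m + n + 1)) by lia.
    rewrite fact_simpl, mult_INR, <- IH, !S_INR, !plus_INR; simpl; ring.
Qed.

Lemma pow_le_rising_prod s n : 0 <= s -> s ^ S n <= rising_prod s n.
Proof.
  intros Hs; induction n as [| n IH]; cbn [rising_prod]; [simpl; lra |].
  rewrite <- tech_pow_Rmult, Rmult_comm.
  apply Rmult_le_compat; [apply pow_le | | | pose proof (pos_INR (S n))]; lra.
Qed.

Lemma rising_prod_le_pow s n : 0 < s -> rising_prod s n <= (s + INR n) ^ S n.
Proof.
  intros Hs; induction n as [| n IH]; cbn [rising_prod]; [simpl; lra |].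
  pose proof (pos_INR n); rewrite S_INR.
  apply Rle_trans with ((s + INR n) ^ S n * (s + (INR n + 1))).
  - apply Rmult_le_compat_r; [lra | auto].
  - rewrite <- (tech_pow_Rmult _ (S n)), Rmult_comm.
    apply Rmult_le_compat_l; [lra |]; apply pow_incr; lra.
Qed.

Lemma gauss_seq_wallis k n : (0 < n)%nat ->
  gauss_seq (INR k + 3 / 2) n =
  INR (fact k) * (INR n ^ S k / rising_prod (INR n + 1) k)
    * (sqrt (INR n) * wallis (2 * k + 2 * n + 3)) / wallis (2 * k + 1).
Proof.
  intros Hn; unfold gauss_seq.
  assert (Hn' : 0 < INR n) by (apply lt_0_INR; lia).
  replace (INR k + 3 / 2) with (INR (S k) + / 2) at 1 by (rewrite S_INR; field).
  rewrite Rpower_plus, Rpower_pow, Rpower_sqrt by auto.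
  pose proof (rising_prod_wallis k n) as Hw.
  pose proof (fact_mul_rising_prod k n) as Hk; pose proof (fact_mul_rising_prod n k) as Hn2.
  replace (n + k + 1)%nat with (k + n + 1)%nat in Hn2 by lia.
  pose proof (wallis_pos (2 * k + 1)); pose proof (wallis_pos (2 * k + 2 * n + 3)).
  pose proof (INR_fact_pos k); pose proof (INR_fact_pos n).
  pose proof (rising_prod_pos (INR n + 1) k ltac:(lra)).
  pose proof (rising_prod_pos (INR k + 1) n ltac:(pose proof (pos_INR k); lra)).
  assert (Hr : rising_prod (INR k + 3 / 2) n
               = rising_prod (INR k + 1) n * wallis (2 * k + 1) / wallis (2 * k + 2 * n + 3)).
  { apply (Rmult_eq_reg_r (wallis (2 * k + 2 * n + 3))); [rewrite Hw; field |]; lra. }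
  assert (Hr1 : rising_prod (INR k + 1) n = INR (fact n) * rising_prod (INR n + 1) k / INR (fact k)).
  { apply (Rmult_eq_reg_l (INR (fact k))); [rewrite Hk, Hn2; field |]; lra. }
  rewrite Hr, Hr1; field; repeat split; lra.
Qed.

Lemma sqrt_mul_wallis k n :
  sqrt (INR n) * wallis (2 * k + 2 * n + 3) = sqrt (INR n * wallis (2 * k + 2 * n + 3) ^ 2).
Proof.
  rewrite sqrt_mult, sqrt_pow2; auto using pos_INR, pow2_ge_0; left; apply wallis_pos.
Qed.

Lemma sqrt_mul_wallis_le k n : sqrt (INR n) * wallis (2 * k + 2 * n + 3) <= sqrt PI / 2.
Proof.
  pose proof (wallis_sq_le (2 * k + 2 * n + 2)) as H.
  replace (S (2 * k + 2 * n + 2)) with (2 * k + 2 * n + 3)%nat in H by lia.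
  rewrite INR_double_add in H; pose proof (pos_INR k).
  pose proof (pow2_ge_0 (wallis (2 * k + 2 * n + 3))).
  rewrite sqrt_mul_wallis.
  replace (sqrt PI / 2) with (sqrt (PI / 4))
    by (pose proof PI_RGT_0; replace (PI / 4) with (PI * (/ 2) ^ 2) by field;
        rewrite sqrt_mult, sqrt_pow2 by lra; field).
  apply sqrt_le_1_alt; simpl INR in H; nra.
Qed.

Lemma sqrt_mul_wallis_ge k n : (k < n)%nat ->
  sqrt (PI / 12) <= sqrt (INR n) * wallis (2 * k + 2 * n + 3).
Proof.
  intros Hkn; pose proof (wallis_sq_ge (2 * k + 2 * n + 3)) as H.
  rewrite INR_double_add in H; pose proof (pow2_ge_0 (wallis (2 * k + 2 * n + 3))).
  assert (INR k + 1 <= INR n) by (rewrite <- S_INR; apply le_INR; lia).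
  pose proof (pos_INR k).
  rewrite sqrt_mul_wallis; apply sqrt_le_1_alt; simpl INR in H; nra.
Qed.

Lemma pow_div_rising_prod_bounds n k : (k < n)%nat ->
  / 2 ^ S k <= INR n ^ S k / rising_prod (INR n + 1) k <= 1.
Proof.
  intros Hkn; assert (Hn : 0 < INR n) by (apply lt_0_INR; lia).
  assert (INR k + 1 <= INR n) by (rewrite <- S_INR; apply le_INR; lia).
  pose proof (rising_prod_pos (INR n + 1) k ltac:(lra)) as Hrp; pose proof (pos_INR k).
  pose proof (pow_lt 2 (S k) ltac:(lra)); pose proof (pow_lt _ (S k) Hn).
  split.
  - assert (Hle : rising_prod (INR n + 1) k <= 2 ^ S k * INR n ^ S k).
    { rewrite <- Rpow_mult_distr; eapply Rle_trans; [apply rising_prod_le_pow; lra |].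
      apply pow_incr; lra. }
    apply (Rmult_le_reg_l (2 ^ S k * rising_prod (INR n + 1) k)); [nra |].
    replace (2 ^ S k * rising_prod (INR n + 1) k * / 2 ^ S k) with (rising_prod (INR n + 1) k)
      by (field; lra).
    replace (2 ^ S k * rising_prod (INR n + 1) k * (INR n ^ S k / rising_prod (INR n + 1) k))
      with (2 ^ S k * INR n ^ S k) by (field; lra); lra.
  - apply (Rmult_le_reg_r (rising_prod (INR n + 1) k)); auto; unfold Rdiv.
    rewrite Rmult_assoc, Rinv_l, Rmult_1_l, Rmult_1_r by lra.
    apply Rle_trans with ((INR n + 1) ^ S k); [apply pow_incr; lra | apply pow_le_rising_prod; lra].
Qed.

Lemma gauss_seq_bounds k n : (k < n)%nat ->
  INR (fact k) * / 2 ^ S k * sqrt (PI / 12) / wallis (2 * k + 1)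
    <= gauss_seq (INR k + 3 / 2) n
    <= INR (fact k) * (sqrt PI / 2) / wallis (2 * k + 1).
Proof.
  intros Hkn; rewrite gauss_seq_wallis by lia.
  destruct (pow_div_rising_prod_bounds n k Hkn) as [Hq2 Hq1].
  pose proof (sqrt_mul_wallis_le k n); pose proof (sqrt_mul_wallis_ge k n Hkn).
  pose proof (INR_fact_pos k); pose proof (wallis_pos (2 * k + 1)).
  pose proof (sqrt_pos (PI / 12)); pose proof (pow_lt 2 (S k) ltac:(lra)).
  assert (0 < / 2 ^ S k) by (apply Rinv_0_lt_compat; lra).
  assert (HW : 0 < / wallis (2 * k + 1)) by (apply Rinv_0_lt_compat; lra).
  set (X := INR n ^ S k / rising_prod (INR n + 1) k) in *.
  set (Y := sqrt (INR n) * wallis (2 * k + 2 * n + 3)) in *.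
  unfold Rdiv; split; apply Rmult_le_compat_r; try lra; rewrite !Rmult_assoc;
    apply Rmult_le_compat_l; try lra.
  - apply Rmult_le_compat; lra.
  - rewrite <- (Rmult_1_l (sqrt PI * / 2)); apply Rmult_le_compat; lra.
Qed.

Lemma Gamma_bounds k G : is_Gamma (INR k + 3 / 2) G ->
  0 < G /\ G * weight_moment k 0 <= INR (fact k) * sqrt PI.
Proof.
  intros HG.
  assert (Hs : Un_cv (fun n => gauss_seq (INR k + 3 / 2) (n + S k)) G) by (apply CV_shift'; auto).
  pose proof (fun n => gauss_seq_bounds k (n + S k) ltac:(lia)) as Hb.
  pose proof (INR_fact_pos k); pose proof (wallis_pos (2 * k + 1)); pose proof PI_RGT_0.
  rewrite weight_moment_0_wallis; split.
  - assert (HL : INR (fact k) * / 2 ^ S k * sqrt (PI / 12) / wallis (2 * k + 1) <= G)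
      by (apply Rle_cv_lim with (Vn := fun n => gauss_seq (INR k + 3 / 2) (n + S k))
            (Un := fun _ => INR (fact k) * / 2 ^ S k * sqrt (PI / 12) / wallis (2 * k + 1));
          [intros n; apply Hb | apply Un_cv_const | exact Hs]).
    eapply Rlt_le_trans; [| exact HL].
    pose proof (pow_lt 2 (S k) ltac:(lra)); pose proof (sqrt_lt_R0 (PI / 12) ltac:(lra)).
    apply Rdiv_lt_0_compat; [apply Rmult_lt_0_compat; [apply Rmult_lt_0_compat |] |];
      auto using Rinv_0_lt_compat.
  - assert (HU : G <= INR (fact k) * (sqrt PI / 2) / wallis (2 * k + 1))
      by (apply Rle_cv_lim with (Vn := fun _ => INR (fact k) * (sqrt PI / 2) / wallis (2 * k + 1))
            (Un := fun n => gauss_seq (INR k + 3 / 2) (n + S k));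
          [intros n; apply Hb | exact Hs | apply Un_cv_const]).
    apply (Rmult_le_compat_r (2 * wallis (2 * k + 1))) in HU; [| lra].
    replace (INR (fact k) * (sqrt PI / 2) / wallis (2 * k + 1) * (2 * wallis (2 * k + 1)))
      with (INR (fact k) * sqrt PI) in HU by (field; lra); exact HU.
Qed.

Lemma legendre_coef_bound_le_Gamma c k G : 0 < c -> is_Gamma (INR k + 3 / 2) G ->
  legendre_coef_bound c k <= (c / 2) ^ k * (sqrt PI / G).
Proof.
  intros hc hG; destruct (Gamma_bounds k G hG) as [HG HGw].
  pose proof (INR_fact_pos k); pose proof (pow_lt 2 k ltac:(lra)); pose proof (pow_lt c k hc).
  unfold legendre_coef_bound.
  replace ((c / 2) ^ k) with (c ^ k * / 2 ^ k)
    by (unfold Rdiv; rewrite Rpow_mult_distr, pow_inv; reflexivity).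
  apply (Rmult_le_reg_r (G * INR (fact k) * / c ^ k * 2 ^ k)).
  - repeat apply Rmult_lt_0_compat; auto using Rinv_0_lt_compat.
  - replace (c ^ k * weight_moment k 0 / (2 ^ k * INR (fact k)) * (G * INR (fact k) * / c ^ k * 2 ^ k))
      with (G * weight_moment k 0) by (field; lra).
    replace (c ^ k * / 2 ^ k * (sqrt PI / G) * (G * INR (fact k) * / c ^ k * 2 ^ k))
      with (INR (fact k) * sqrt PI) by (field; lra).
    exact HGw.
Qed.

Theorem lemma7 (c : R) (psi : R -> R) (mr mi : R) (k : nat)
  (hc : 0 < c)
  (heig : prolate_eigen c psi mr mi)
  (hmu : mr <> 0 \/ mi <> 0)
  (G : R) (hG : is_Gamma (INR k + 3 / 2) G)
  (pr : Riemann_integrable (fun x => Pbar k x * psi x) (-1) 1) :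
  Rabs (RiemannInt pr)
    <= (c / 2) ^ k * (sqrt PI / G) * / sqrt (mr ^ 2 + mi ^ 2).
Proof.
  rewrite <- (integral_RiemannInt _ _ _ pr).
  assert (Hmu : 0 < sqrt (mr ^ 2 + mi ^ 2))
    by (apply sqrt_lt_R0; destruct hmu as [H | H]; apply Rsqr_pos_lt in H; unfold Rsqr in H; nra).
  apply (Rmult_le_reg_r (sqrt (mr ^ 2 + mi ^ 2))); [exact Hmu |].
  rewrite Rmult_assoc, Rinv_l, Rmult_1_r by lra.
  eapply Rle_trans; [exact (prolate_legendre_coef_le c psi mr mi k hc heig) |].
  apply legendre_coef_bound_le_Gamma; auto.
Qed.
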